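(* Let $f(x,y)=\sum_{i=0}^rf_iy^ix^{r-i}$ and $g(x,y)=\sum_{j=0}^sg_jy^jx^{s-j}$ be homogeneous polynomials of degrees $r$ and $s$. Then for $\nu\ge1$ the $\nu$-th $q$-derivative (with respect to $x$) of their $q$-product is $$\big(f(x,y)*g(x,y)\big)^{(\nu)}=\sum_{l=0}^{\nu}{\nu\brack l}q^{(\nu-l)(r-l)}f^{(l)}(x,y)*g^{(\nu-l)}(x,y).$$
   Context: $q\ge2$ is a prime power. Gaussian binomial ${\nu\brack l}=\prod_{i=0}^{l-1}\frac{q^\nu-q^i}{q^l-q^i}$ ($=1$ for $l=0$). $q$-derivative: for a real function $f$, $f^{(1)}(x)=\frac{f(qx)-f(x)}{(q-1)x}$ for $x\ne0$; for $f(x,y)$, $f^{(\nu)}$ denotes the $\nu$-fold iterate of this operator applied in the variable $x$, with $f^{(0)}=f$. $q$-product: for homogeneous polynomials $a(x,y;m)=\sum_{i=0}^{d}a_i(m)y^ix^{d-i}$ and $b(x,y;m)=\sum_{j=0}^{e}b_j(m)y^jx^{e-j}$ of degrees $d,e$, whose coefficients are real functions of a parameter $m$ (zero for indices outside the given ranges; constants allowed), $a*b=\sum_{u=0}^{d+e}c_u(m)y^ux^{d+e-u}$ with $c_u(m)=\sum_{i=0}^uq^{ie}a_i(m)b_{u-i}(m-i)$. *)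

From mathcomp Require Import all_boot all_order all_algebra.
Set Implicit Arguments. Unset Strict Implicit. Unset Printing Implicit Defensive.
Import GRing.Theory Num.Theory.
Local Open Scope ring_scope.

Definition gauss {R : fieldType} (q : R) (nu l : nat) : R :=
  \prod_(i < l) ((q ^+ nu - q ^+ i) / (q ^+ l - q ^+ i)).

Definition hev {R : ringType} (d : nat) (a : nat -> R) (x y : R) : R :=
  \sum_(i < d.+1) a i * y ^+ i * x ^+ (d - i).

(* q-product of a (degree d) and b (degree e), coefficients being functions of
   the parameter m : int; coefficients outside 0..d resp. 0..e count as zero. *)
Definition qprod {R : ringType} (q : R) (d e : nat) (a b : int -> nat -> R)
  : int -> nat -> R :=
  fun m u => \sum_(i < u.+1)
    (if (i <= d)%N && (u - i <= e)%N
     then q ^+ (i * e) * a m i * b (m - (i : nat)%:Z) (u - i)%N else 0).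

(* q-derivative in the variable x of a function f(x,y); defined for x <> 0
   (value 0 at x = 0 is an irrelevant convention). *)
Definition qD {R : fieldType} (q : R) (F : R -> R -> R) : R -> R -> R :=
  fun x y => if x == 0 then 0 else (F (q * x) y - F x y) / ((q - 1) * x).

From mathcomp Require Import all_boot all_order all_algebra.
From mathcomp Require Import ring zify.
Set Implicit Arguments. Unset Strict Implicit. Unset Printing Implicit Defensive.
Import Order.TTheory GRing.Theory Num.Theory.
Local Open Scope ring_scope.

(* Since D x^n = [n]_q x^(n-1), the l-th q-derivative of sum_i a_i y^i x^(d-i)
   has coefficients a_i [d-i]_q [d-i-1]_q ... [d-i-l+1]_q; as a form vanishing
   at every x <> 0 is zero, this identifies the families Fd and Gd.  Expanding
   the q-product bilinearly, both sides become sums over pairs (i, j) of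
   q^(is) f_i g_j y^(i+j) times a power of x, and the identity reduces term by
   term to the q-Vandermonde convolution of falling q-factorials
   [a+b]_nu = sum_l [nu brack l] q^((nu-l)(a-l)) [a]_l [b]_(nu-l)
   with a = r - i, b = s - j. *)

Lemma sumr_ord_widen (V : nmodType) n N (F : nat -> V) : (n <= N)%N ->
  (forall i, (n <= i < N)%N -> F i = 0) -> \sum_(i < n) F i = \sum_(i < N) F i.
Proof.
move=> le_nN F0; rewrite (big_ord_widen _ _ le_nN) big_mkcond /=.
by apply: eq_bigr => i _; case: ltnP => // le_ni; rewrite F0 // le_ni ltn_ord.
Qed.

Lemma sumr_ord_window (V : nmodType) N i e (F : nat -> V) : (i + e < N)%N ->
  \sum_(u < N | (i <= u)%N && (u - i <= e)%N) F u = \sum_(j < e.+1) F (i + j)%N.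
Proof.
move=> lt_ieN.
have -> : \sum_(j < e.+1) F (i + j)%N = \sum_(0 + i <= u < e.+1 + i) F u.
  by rewrite big_addn addnK big_mkord; apply: eq_bigr => j _; rewrite addnC.
have le_N : (e.+1 + i <= N)%N by lia.
rewrite add0n big_geq_mkord (big_ord_widen_cond _ _ _ le_N).
by apply: eq_bigl => u; apply/idP/idP; lia.
Qed.

Lemma sumr_pair (V : nmodType) (I J : finType) (F : I * J -> V) (G : I -> J -> V) :
  (forall i j, F (i, j) = G i j) -> \sum_p F p = \sum_i \sum_j G i j.
Proof. by move=> FG; rewrite pair_bigA; apply: eq_bigr => -[i j] _. Qed.

Lemma hev_qprod (R : nzRingType) (Q : R) d e (a b : int -> nat -> R) m x y :
  hev (d + e) (qprod Q d e a b m) x y =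
  \sum_(i < d.+1) \sum_(j < e.+1)
    Q ^+ (i * e) * a m i * b (m - i%:Z) j * y ^+ (i + j) * x ^+ (d - i + (e - j)).
Proof.
pose T u i := Q ^+ (i * e) * a m i * b (m - i%:Z) (u - i)%N * y ^+ u * x ^+ (d + e - u).
have lt_ie i : (i < d.+1)%N -> (i + e < (d + e).+1)%N by lia.
transitivity (\sum_(u < (d + e).+1) \sum_(i < d.+1 | (i <= u)%N && (u - i <= e)%N) T u i).
  rewrite /hev /qprod; apply: eq_bigr => u _; rewrite -big_mkcond mulr_suml mulr_suml.
  rewrite (big_ord_widen_cond _ (fun i => (i <= d)%N && (u - i <= e)%N) (T u) (ltn_ord u)).
  have le_dN : (d.+1 <= (d + e).+1)%N by lia.
  rewrite (big_ord_widen_cond _ (fun i => (i <= u)%N && (u - i <= e)%N) (T u) le_dN).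
  by apply: eq_bigl => i; apply/idP/idP; lia.
rewrite (exchange_big_dep xpredT) //=; apply: eq_bigr => i _.
rewrite (sumr_ord_window (T^~ i) (lt_ie _ (ltn_ord i))); apply: eq_bigr => j _.
have lt_id := ltn_ord i; have lt_je := ltn_ord j.
by rewrite /T addKn; congr (_ * x ^+ _); lia.
Qed.

Lemma hev_coef_inj (R : numDomainType) n (a b : nat -> R) :
  (forall x, x != 0 -> hev n a x 1 = hev n b x 1) -> forall i, (i <= n)%N -> a i = b i.
Proof.
move=> eq_ab i le_in; apply/eqP; rewrite -subr_eq0; apply/eqP.
pose p : {poly R} := \poly_(k < n.+1) (a (n - k)%N - b (n - k)%N).
have p_hev x : p.[x] = hev n a x 1 - hev n b x 1.
  rewrite horner_poly (reindex_inj rev_ord_inj) /hev -sumrB; apply: eq_bigr => k _.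
  by rewrite /= subSS subKn ?leq_ord // expr1n !mulr1 mulrBl.
have p_eq0 : p = 0.
  apply: (@roots_geq_poly_eq0 _ p [seq j.+1%:R | j <- iota 0 n.+1]).
  - apply/allP => _ /mapP [j _ ->]; apply/rootP.
    by rewrite p_hev eq_ab ?subrr ?pnatr_eq0.
  - by rewrite map_inj_uniq ?iota_uniq // => j k /eqP; rewrite eqr_nat => /eqP [].
  - by rewrite size_map size_iota size_poly.
have := congr1 (fun p : {poly R} => p`_(n - i)) p_eq0.
by rewrite coef_poly coef0 ltnS leq_subr subKn.
Qed.

Section QCalculus.
Variables (R : fieldType) (Q : R).
Hypothesis Qk_neq1 : forall k, (0 < k)%N -> Q ^+ k != 1.

Definition qint (n : nat) : R := (Q ^+ n - 1) / (Q - 1).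
Definition qfall (n k : nat) : R := \prod_(j < k) qint (n - j).

Lemma subQ1_neq0 : Q - 1 != 0.
Proof. by rewrite subr_eq0 -[Q]expr1 Qk_neq1. Qed.

Lemma qint_eq0 n : (qint n == 0) = (n == 0%N).
Proof.
rewrite /qint mulf_eq0 invr_eq0 (negbTE subQ1_neq0) orbF subr_eq0.
by case: n => [|n]; rewrite ?expr0 ?eqxx // (negbTE (Qk_neq1 _)).
Qed.

Lemma qintD a b : qint (a + b) = qint a + Q ^+ a * qint b.
Proof. by rewrite /qint exprD; field; rewrite subQ1_neq0. Qed.

Lemma qfalln0 n : qfall n 0 = 1. Proof. by rewrite /qfall big_ord0. Qed.

Lemma qfallnSr n k : qfall n k.+1 = qfall n k * qint (n - k).
Proof. by rewrite /qfall big_ord_recr. Qed.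

Lemma qfallSS n k : qfall n.+1 k.+1 = qint n.+1 * qfall n k.
Proof. by rewrite /qfall big_ord_recl subn0; congr (_ * _). Qed.

Lemma qfall_eq0 n k : (qfall n k == 0) = (n < k)%N.
Proof.
apply/prodf_eq0/idP => [[j _]|lt_nk].
  by rewrite qint_eq0 subn_eq0 => /leq_ltn_trans; apply.
by exists (Ordinal lt_nk); rewrite // subnn /qint expr0 subrr mul0r.
Qed.

Lemma qfall_small n k : (n < k)%N -> qfall n k = 0.
Proof. by rewrite -qfall_eq0 => /eqP. Qed.

(* A and B are only constrained on their genuine index ranges; the extra terms
   of the widened sums vanish because qfall (d - i) l = 0 for i > d - l. *)
Lemma hev_qprod_qfall d e l k (a b A B : int -> nat -> R) :
  (forall m i, (i <= d - l)%N -> A m i = a m i * qfall (d - i) l) ->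
  (forall m j, (j <= e - k)%N -> B m j = b m j * qfall (e - j) k) ->
  forall m x y, hev (d - l + (e - k)) (qprod Q (d - l) (e - k) A B m) x y =
  \sum_(i < d.+1) \sum_(j < e.+1) Q ^+ (i * (e - k)) * (a m i * qfall (d - i) l) *
    (b (m - i%:Z) j * qfall (e - j) k) * y ^+ (i + j) * x ^+ (d - i - l + (e - j - k)).
Proof.
move=> AE BE m x y; rewrite hev_qprod.
pose T i j := Q ^+ (i * (e - k)) * (a m i * qfall (d - i) l) *
  (b (m - i%:Z) j * qfall (e - j) k) * y ^+ (i + j) * x ^+ (d - i - l + (e - j - k)).
rewrite -(@sumr_ord_widen _ (d - l).+1 _ (fun i => \sum_(j < e.+1) T i j)) => [||i /andP [? ?]].
- apply: eq_bigr => i _; have le_idl := leq_ord i.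
  rewrite -(@sumr_ord_widen _ (e - k).+1 _ (T i)) => [||j /andP [? ?]].
  + apply: eq_bigr => j _; have le_jek := leq_ord j.
    by rewrite AE // BE // /T [(d - l - i)%N]subnAC [(e - k - j)%N]subnAC.
  + by rewrite ltnS leq_subr.
  + by rewrite /T [qfall (e - j) k]qfall_small ?mulr0 ?mul0r //; lia.
- by rewrite ltnS leq_subr.
- by rewrite big1 // => j _; rewrite /T [qfall (d - i) l]qfall_small ?mulr0 ?mul0r //; lia.
Qed.

Hypothesis Q_neq0 : Q != 0.

Lemma subr_qpow n i : (i <= n)%N -> Q ^+ n - Q ^+ i = (Q - 1) * Q ^+ i * qint (n - i).
Proof.
move=> le_in; rewrite /qint -{1}(subnKC le_in) exprD.
by field; rewrite subQ1_neq0.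
Qed.

Lemma gauss_qfall n l : gauss Q n l = qfall n l / qfall l l.
Proof.
have [le_ln | lt_nl] := leqP l n; last first.
  rewrite qfall_small // mul0r; apply/eqP/prodf_eq0.
  by exists (Ordinal lt_nl); rewrite //= subrr mul0r.
rewrite /gauss /qfall -prodf_div; apply: eq_bigr => i _.
have lt_il := ltn_ord i; have le_in := leq_trans (ltnW lt_il) le_ln.
rewrite subr_qpow // subr_qpow 1?ltnW //.
have qint_li : qint (l - i) != 0 by rewrite qint_eq0 subn_eq0 -ltnNge.
by field; rewrite qint_li subQ1_neq0 expf_neq0.
Qed.

Lemma gaussn0 n : gauss Q n 0 = 1.
Proof. exact: big_ord0. Qed.

Lemma gaussnn n : gauss Q n n = 1.
Proof. by rewrite gauss_qfall divff // qfall_eq0 ltnn. Qed.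

Lemma gauss_small n l : (n < l)%N -> gauss Q n l = 0.
Proof. by move=> lt_nl; rewrite gauss_qfall qfall_small ?mul0r. Qed.

Lemma gaussS n l : gauss Q n.+1 l.+1 = gauss Q n l + Q ^+ l.+1 * gauss Q n l.+1.
Proof.
rewrite !gauss_qfall qfallSS (qfallnSr n l) (qfallSS l l).
have -> : qint n.+1 * qfall n l = (qint l.+1 + Q ^+ l.+1 * qint (n - l)) * qfall n l.
  have [le_ln | lt_nl] := leqP l n; last by rewrite qfall_small // !mulr0.
  by rewrite -qintD addSn subnKC.
have qfall_ll : qfall l l != 0 by rewrite qfall_eq0 ltnn.
have qint_l1 : qint l.+1 != 0 by rewrite qint_eq0.
by field; rewrite qfall_ll qint_l1.
Qed.

Lemma qVandermonde a b nu :
  qfall (a + b) nu =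
  \sum_(l < nu.+1) gauss Q nu l * Q ^+ ((nu - l) * (a - l)) * qfall a l * qfall b (nu - l).
Proof.
elim: nu a b => [|nu IH] a b.
  by rewrite big_ord1 gaussn0 !qfalln0 !mulr1.
case: a => [|a].
  rewrite big_ord_recl big1 => [|i _]; last by rewrite [qfall 0 _]qfall_small ?mulr0 ?mul0r.
  by rewrite gaussn0 qfalln0 muln0 expr0 !mul1r subn0 add0n addr0.
case: b => [|b].
  rewrite big_ord_recr big1 /= => [|i _]; last by rewrite [qfall 0 _]qfall_small ?mulr0 // subn_gt0.
  by rewrite gaussnn subnn mul0n expr0 qfalln0 !mulr1 mul1r addn0 add0r.
have -> : qfall (a.+1 + b.+1) nu.+1 =
    qint a.+1 * qfall (a + b.+1) nu + Q ^+ a.+1 * qint b.+1 * qfall (a.+1 + b) nu.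
  by rewrite addSn qfallSS -addSn qintD mulrDl addnS.
rewrite big_ord_recl.
under eq_bigr => i _ do rewrite lift0 gaussS !mulrDl.
rewrite big_split /= !IH addrCA; congr (_ + _).
  rewrite mulr_sumr; apply: eq_bigr => i _.
  by rewrite !subSS qfallSS; ring.
rewrite [in RHS]big_ord_recr /= (gauss_small (ltnSn nu)) mulr0 !mul0r addr0.
rewrite mulr_sumr [in LHS]big_ord_recl; congr (_ + _).
  by rewrite !gaussn0 !qfalln0 !subn0 qfallSS mulSn exprD; ring.
apply: eq_bigr => i _; rewrite lift0.
have lt_inu : (i < nu)%N := ltn_ord i.
rewrite [(nu.+1 - _)%N]subSS -(subnSK lt_inu) (qfallSS b).
have [le_ia | lt_ai] := leqP i.+1 a.+1; last by rewrite (qfall_small lt_ai); ring.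
have E : (a.+1 + (nu - i.+1) * (a.+1 - i.+1) = i.+1 + (nu - i.+1).+1 * (a.+1 - i.+1))%N by nia.
rewrite [LHS](_ : _ = gauss Q nu i.+1 * (Q ^+ a.+1 * Q ^+ ((nu - i.+1) * (a.+1 - i.+1))) *
   qfall a.+1 i.+1 * (qint b.+1 * qfall b (nu - i.+1))); last by ring.
by rewrite -exprD E exprD; ring.
Qed.

Lemma qVandermonde_qprod r s i j nu x : (i <= r)%N ->
  Q ^+ (i * s) * qfall (r - i + (s - j)) nu * x ^+ (r - i + (s - j) - nu) =
  \sum_(l < nu.+1) gauss Q nu l * Q ^+ ((nu - l) * (r - l)) *
    (Q ^+ (i * (s - (nu - l))) * qfall (r - i) l * qfall (s - j) (nu - l) *
     x ^+ (r - i - l + (s - j - (nu - l)))).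
Proof.
move=> le_ir; rewrite qVandermonde mulr_sumr mulr_suml; apply: eq_bigr => l _.
have le_lnu := leq_ord l.
have [lt_ril | le_lri] := ltnP (r - i) l; first by rewrite qfall_small //; ring.
have [lt_sjl | le_lsj] := ltnP (s - j) (nu - l).
  by rewrite [qfall (s - j) _]qfall_small //; ring.
have -> : (r - i + (s - j) - nu = r - i - l + (s - j - (nu - l)))%N by lia.
have QE : Q ^+ (i * s) * Q ^+ ((nu - l) * (r - i - l)) =
    Q ^+ ((nu - l) * (r - l)) * Q ^+ (i * (s - (nu - l))).
  by rewrite -!exprD; congr (Q ^+ _); nia.
rewrite [LHS](_ : _ = gauss Q nu l * (Q ^+ (i * s) * Q ^+ ((nu - l) * (r - i - l))) *
    qfall (r - i) l * qfall (s - j) (nu - l) * x ^+ (r - i - l + (s - j - (nu - l))));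
  last by ring.
by rewrite QE; ring.
Qed.

Lemma qD_pow x e : x != 0 ->
  ((Q * x) ^+ e - x ^+ e) / ((Q - 1) * x) = qint e * x ^+ e.-1.
Proof.
move=> x_neq0; case: e => [|e]; first by rewrite subrr mul0r /qint expr0 subrr !mul0r.
by rewrite /qint exprMn !exprS /=; field; rewrite x_neq0 subQ1_neq0.
Qed.

Lemma iter_qD_sum (I : finType) (c : I -> R -> R) (n : I -> nat) (F : R -> R -> R) :
  (forall x y, x != 0 -> F x y = \sum_k c k y * x ^+ n k) ->
  forall l x y, x != 0 ->
  iter l (qD Q) F x y = \sum_k c k y * qfall (n k) l * x ^+ (n k - l).
Proof.
move=> FE; elim=> [|l IH] x y x_neq0.
  by rewrite /= FE //; apply: eq_bigr => k _; rewrite qfalln0 mulr1 subn0.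
rewrite iterS /qD (negbTE x_neq0) !IH ?mulf_neq0 // -sumrB mulr_suml.
apply: eq_bigr => k _; rewrite -!mulrA -mulrBr -mulrA -mulrBr -!mulrA.
by rewrite qD_pow // qfallnSr subnS !mulrA.
Qed.

Lemma iter_qD_hev d (a : nat -> R) l x y : x != 0 ->
  iter l (qD Q) (hev d a) x y = hev (d - l) (fun i => a i * qfall (d - i) l) x y.
Proof.
move=> x_neq0.
rewrite (@iter_qD_sum _ (fun (i : 'I_d.+1) y => a i * y ^+ i) (fun i : 'I_d.+1 => d - i)%N) //.
rewrite /hev [RHS](@sumr_ord_widen _ _ d.+1
  (fun i => a i * qfall (d - i) l * y ^+ i * x ^+ (d - l - i))) => [||i /andP [lt_dli lt_id]].
- by apply: eq_bigr => i _; rewrite subnAC; congr (_ * _); ring.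
- by rewrite ltnS leq_subr.
- by rewrite qfall_small ?mulr0 ?mul0r //; lia.
Qed.

End QCalculus.

Lemma iter_qD_coef (R : numFieldType) (Q : R) d l (a A : nat -> R) :
  (forall k, (0 < k)%N -> Q ^+ k != 1) -> Q != 0 ->
  (forall x, x != 0 -> hev (d - l) A x 1 = iter l (qD Q) (hev d a) x 1) ->
  forall i, (i <= d - l)%N -> A i = a i * qfall Q (d - i) l.
Proof.
move=> Qk_neq1 Q_neq0 AE; apply: hev_coef_inj => x x_neq0.
by rewrite AE // iter_qD_hev.
Qed.

Lemma prime_power_gt1 p k : prime p -> (0 < k)%N -> (1 < p ^ k)%N.
Proof. by move=> p_pr k_gt0; rewrite -(expn0 p) ltn_exp2l // prime_gt1. Qed.

Theorem lemma4 (R : realFieldType) (q : nat)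
  (Hq : exists p k : nat, prime p /\ (0 < k)%N /\ q = (p ^ k)%N)
  (r s : nat) (f g : int -> nat -> R)
  (* Fd l, Gd l : coefficient families of the l-th q-derivatives of f, g
     (homogeneous of degrees r - l, s - l) *)
  (Fd Gd : nat -> int -> nat -> R)
  (HF : forall (l : nat) (m : int) (x y : R), x != 0 ->
        hev (r - l) (Fd l m) x y = iter l (qD q%:R) (hev r (f m)) x y)
  (HG : forall (l : nat) (m : int) (x y : R), x != 0 ->
        hev (s - l) (Gd l m) x y = iter l (qD q%:R) (hev s (g m)) x y)
  (nu : nat) (Hnu : (1 <= nu)%N) (m : int) (x y : R) (Hx : x != 0) :
  iter nu (qD q%:R) (hev (r + s) (qprod q%:R r s f g m)) x y =
  \sum_(l < nu.+1)
     gauss q%:R nu l * q%:R ^+ ((nu - l) * (r - l)) *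
     hev ((r - l) + (s - (nu - l)))
         (qprod q%:R (r - l) (s - (nu - l)) (Fd l) (Gd (nu - l)%N) m) x y.
Proof.
have Q_gt1 : 1 < q%:R :> R by case: Hq => p [k [p_pr [k_gt0 ->]]]; rewrite ltr1n prime_power_gt1.
set Q : R := q%:R in Q_gt1 *.
have Q_neq0 : Q != 0 by rewrite gt_eqF // (lt_trans ltr01 Q_gt1).
have Qk_neq1 k : (0 < k)%N -> Q ^+ k != 1 by move=> k_gt0; rewrite gt_eqF // exprn_egt1 // -lt0n.
have FdE l m' := iter_qD_coef Qk_neq1 Q_neq0 (fun x Hx => HF l m' x 1 Hx).
have GdE l m' := iter_qD_coef Qk_neq1 Q_neq0 (fun x Hx => HG l m' x 1 Hx).
have hev_fg x' y' : x' != 0 -> hev (r + s) (qprod Q r s f g m) x' y' =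
    \sum_(p : 'I_r.+1 * 'I_s.+1) Q ^+ (p.1 * s) * f m p.1 * g (m - p.1%:Z) p.2 * y' ^+ (p.1 + p.2)
      * x' ^+ (r - p.1 + (s - p.2)).
  by move=> _; rewrite hev_qprod; exact: pair_bigA.
rewrite (iter_qD_sum Qk_neq1 Q_neq0 hev_fg) //; symmetry.
under eq_bigr => l _ do rewrite (hev_qprod_qfall Qk_neq1 (FdE l) (GdE (nu - l)%N)) mulr_sumr.
under eq_bigr => l _ do under eq_bigr => i _ do rewrite mulr_sumr.
rewrite exchange_big; under eq_bigr => i _ do rewrite exchange_big.
symmetry; apply: sumr_pair => i j /=.
rewrite [LHS](_ : _ = f m i * g (m - i%:Z) j * y ^+ (i + j) *
  (Q ^+ (i * s) * qfall Q (r - i + (s - j)) nu * x ^+ (r - i + (s - j) - nu))); last by ring.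
rewrite (qVandermonde_qprod Qk_neq1 Q_neq0) ?leq_ord // mulr_sumr.
by apply: eq_bigr => l _; ring.
Qed.
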